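(* Let $L$ be a non-degenerate indefinite lattice of rank $\geq 5$, and $N$ a natural number. Then $L$ contains a primitive rank $2$ sublattice $\Lambda$ of signature $(1,1)$ such that $|q(x,x)|\geq N$ for every nonzero $x\in\Lambda$.
   Context: A lattice is a free abelian group $L\cong\mathbb{Z}^n$ with an integer-valued quadratic form $q$. A sublattice $\Lambda\subset L$ is primitive if $L/\Lambda$ is torsion-free. *)

(* A lattice of rank n is Z^n (row vectors 'rV[int]_n)
   with an integer symmetric bilinear form given by its Gram matrix A. *)
From HB Require Import structures.
From mathcomp Require Import all_boot all_order all_algebra.
Set Implicit Arguments. Unset Strict Implicit. Unset Printing Implicit Defensive.
Import Order.TTheory GRing.Theory Num.Theory.
Local Open Scope ring_scope.

Definition bil n (A : 'M[int]_n) (x y : 'rV[int]_n) : int := (x *m A *m y^T) 0 0.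

Definition sym_gram n (A : 'M[int]_n) : Prop := A^T = A.

Definition lat_nondeg n (A : 'M[int]_n) : Prop := \det A != 0.

Definition lat_indef n (A : 'M[int]_n) : Prop :=
  (exists x, 0 < bil A x x) /\ (exists y, bil A y y < 0).

Definition in_span2 n (u v w : 'rV[int]_n) : Prop :=
  exists a b : int, w = a *: u + b *: v.

Definition rank2 n (u v : 'rV[int]_n) : Prop :=
  forall a b : int, a *: u + b *: v = 0 -> a = 0 /\ b = 0.

(* L / Lambda is torsion-free *)
Definition primitive2 n (u v : 'rV[int]_n) : Prop :=
  forall (k : int) (x : 'rV[int]_n), k != 0 -> in_span2 u v (k *: x) -> in_span2 u v x.

Definition gram2 n (A : 'M[int]_n) (u v : 'rV[int]_n) : 'M[int]_2 :=
  \matrix_(i < 2, j < 2)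
    bil A (if i == 0 :> nat then u else v) (if j == 0 :> nat then u else v).

Definition sig11 n (A : 'M[int]_n) (u v : 'rV[int]_n) : Prop :=
  \det (gram2 A u v) != 0 /\
  (exists x, in_span2 u v x /\ 0 < bil A x x) /\
  (exists y, in_span2 u v y /\ bil A y y < 0).

From HB Require Import structures.
From mathcomp Require Import all_boot all_order all_algebra.
From mathcomp Require Import zify ring.
Set Implicit Arguments. Unset Strict Implicit. Unset Printing Implicit Defensive.
Import Order.TTheory GRing.Theory Num.Theory.
Local Open Scope ring_scope.

(** Pick a prime p > N not dividing det A.  Modulo p the form is non-degenerate
    of rank at least 5, so it has a totally isotropic plane with dual vectors;
    lifting it and correcting the lifts modulo p^2 gives u, v such that on
    Z u + Z v the form is p times a binary form reducing to x^2 - e y^2 with e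
    a non-square mod p.  By descent such a form has no nonzero zero, and the
    property passes to the saturation of Z u + Z v: if m x lies in Z u + Z v,
    dividing out the factors p of m shows p | q(x) <> 0, so |q(x)| >= p > N.
    Shifting u and v by p^2 times a positive, resp. negative, vector beforehand
    makes the saturated plane indefinite. *)

Section BilinearForm.
Variables (R : comNzRingType) (n : nat) (A : 'M[R]_n).

Definition bform (x y : 'rV[R]_n) : R := (x *m A *m y^T) 0 0.

Lemma bformDl x y z : bform (x + y) z = bform x z + bform y z.
Proof. by rewrite /bform !mulmxDl mxE. Qed.

Lemma bformDr x y z : bform x (y + z) = bform x y + bform x z.
Proof. by rewrite /bform linearD /= mulmxDr mxE. Qed.

Lemma bformZl a x z : bform (a *: x) z = a * bform x z.
Proof. by rewrite /bform -!scalemxAl mxE. Qed.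

Lemma bformZr a x z : bform x (a *: z) = a * bform x z.
Proof. by rewrite /bform linearZ /= -scalemxAr mxE. Qed.

Lemma bform0l z : bform 0 z = 0.
Proof. by rewrite /bform !mul0mx mxE. Qed.

Lemma bformNr x z : bform x (- z) = - bform x z.
Proof. by rewrite -scaleN1r bformZr mulN1r. Qed.

Lemma bform_shift y1 y2 w1 w2 m :
  bform (y1 + m *: w1) (y2 + m *: w2) =
  bform y1 y2 + m * (bform w1 y2 + bform y1 w2 + m * bform w1 w2).
Proof. by rewrite !bformDl !bformDr !bformZl !bformZr; ring. Qed.

Hypothesis symA : A^T = A.

Lemma bformC x y : bform x y = bform y x.
Proof.
rewrite /bform; transitivity ((x *m A *m y^T)^T 0 0); first by rewrite [RHS]mxE.
by rewrite !trmx_mul trmxK symA mulmxA.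
Qed.

Lemma bform_comb s t u v :
  bform (s *: u + t *: v) (s *: u + t *: v) =
  s ^+ 2 * bform u u + 2 * s * t * bform u v + t ^+ 2 * bform v v.
Proof. by rewrite !bformDl !bformDr !bformZl !bformZr (bformC v u); ring. Qed.

End BilinearForm.

Lemma bform_oppA (R : comNzRingType) n (A : 'M[R]_n) x y :
  bform (- A) x y = - bform A x y.
Proof. by rewrite /bform mulmxN mulNmx mxE. Qed.

Lemma rmorph_bform (R S : comNzRingType) (f : {rmorphism R -> S}) n
    (A : 'M[R]_n) x y :
  f (bform A x y) = bform (map_mx f A) (map_mx f x) (map_mx f y).
Proof.
rewrite /bform; transitivity (map_mx f (x *m A *m y^T) 0 0); first by rewrite [RHS]mxE.
by rewrite !map_mxM map_trmx.
Qed.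

Section OddPrimeField.
Variable p : nat.
Hypotheses (p_pr : prime p) (p_gt2 : (2 < p)%N).

Lemma Fp_nat_eq0 k : (k < p)%N -> (k%:R = 0 :> 'F_p) -> k = 0%N.
Proof. by move=> ltkp /(congr1 (@nat_of_ord _)); rewrite val_Fp_nat // modn_small. Qed.

Lemma odd_prime_half : p = (p./2).*2.+1.
Proof.
have /negPn p_odd : ~~ ~~ odd p by apply/(prime_oddPn p_pr); lia.
by rewrite -[LHS]odd_double_half p_odd.
Qed.

Lemma Fp_two_neq0 : 2 != 0 :> 'F_p.
Proof. by apply/eqP => /(Fp_nat_eq0 p_gt2). Qed.

Lemma Fp_sqr_half_inj :
  injective (fun k : 'I_(p./2).+1 => (k%:R : 'F_p) ^+ 2).
Proof.
have p_half := odd_prime_half.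
move=> k l /eqP; rewrite eqf_sqr => /orP[/eqP | ]; last first.
  rewrite -subr_eq0 opprK -natrD => /eqP kl0.
  have lt_kl : (k + l < p)%N by have := ltn_ord k; have := ltn_ord l; lia.
  by apply: val_inj => /=; have := Fp_nat_eq0 lt_kl kl0; lia.
move/(congr1 (@nat_of_ord _)); rewrite !val_Fp_nat // !modn_small => [/val_inj //||];
  have := ltn_ord k; have := ltn_ord l; lia.
Qed.

Lemma Fp_binary_form_universal (a b c : 'F_p) : a != 0 -> b != 0 ->
  exists x y, a * x ^+ 2 + b * y ^+ 2 = c.
Proof.
move=> a_neq0 b_neq0; pose I := 'I_(p./2).+1.
pose f1 (k : I) := a * k%:R ^+ 2; pose f2 (k : I) := c - b * k%:R ^+ 2.
have f1_inj : injective f1 by move=> k l /(mulfI a_neq0) /Fp_sqr_half_inj.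
have f2_inj : injective f2.
  by move=> k l /addrI /oppr_inj /(mulfI b_neq0) /Fp_sqr_half_inj.
(* Pigeonhole: the (p+1)/2 values of f1 and the (p+1)/2 values of f2 meet. *)
have : [set f1 k | k in I] :&: [set f2 k | k in I] != set0.
  have := cardsUI [set f1 k | k in I] [set f2 k | k in I].
  rewrite !card_imset // card_ord.
  have := max_card ([set f1 k | k in I] :|: [set f2 k | k in I]).
  rewrite card_Fp // -card_gt0.
  by have := odd_prime_half; lia.
case/set0Pn => z; rewrite inE => /andP[/imsetP[k _ ->] /imsetP[l _]].
by move=> /eqP; rewrite eq_sym subr_eq => /eqP ->; exists k%:R, l%:R; rewrite addrC.
Qed.

Lemma Fp_exists_nonsquare : exists e : 'F_p, forall x, x ^+ 2 != e.
Proof.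
have [e /forallP e_nonsq | all_sq] := pickP (fun e : 'F_p => [forall x, x ^+ 2 != e]).
  by exists e.
have : #|[seq x ^+ 2 | x in 'F_p]| == #|'F_p|.
  rewrite eqn_leq leq_image_card; apply/subset_leq_card/subsetP => e _.
  have /negbT := all_sq e; rewrite negb_forall => /existsP[x].
  by rewrite negbK => /eqP <-; apply: image_f.
move/image_injP => /(_ 1 (-1) isT isT); rewrite sqrrN => /(_ erefl) /eqP.
by rewrite -subr_eq0 opprK (negbTE Fp_two_neq0).
Qed.

End OddPrimeField.

Lemma kermx_neq0 (F : fieldType) n k (C : 'M[F]_(n, k)) :
  (k < n)%N -> exists2 w : 'rV_n, w != 0 & w *m C = 0.
Proof.
move=> lt_kn; have : kermx C != 0.
  by rewrite -mxrank_eq0 mxrank_ker; have := rank_leq_col C; lia.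
by case/rowV0Pn => w /sub_kermxP wC w_neq0; exists w.
Qed.

Section IsotropicVectors.
Variables (F : fieldType) (n : nat) (A : 'M[F]_n).
Hypothesis symA : A^T = A.
Hypothesis binary_universal : forall a b c : F, a != 0 -> b != 0 ->
  exists x y, a * x ^+ 2 + b * y ^+ 2 = c.

Lemma mul_row_form_eq0 k (w e : 'rV[F]_n) (C : 'M_(n, k)) :
  w *m row_mx C (A *m e^T) = 0 -> w *m C = 0 /\ bform A w e = 0.
Proof.
rewrite mul_mx_row => /eqP; rewrite row_mx_eq0 => /andP[/eqP -> /eqP we].
by rewrite /bform -mulmxA we mxE.
Qed.

Lemma exists_isotropic_comb e1 e2 e3 :
  bform A e1 e2 = 0 -> bform A e1 e3 = 0 -> bform A e2 e3 = 0 ->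
  bform A e1 e1 != 0 -> bform A e2 e2 != 0 -> e3 != 0 ->
  exists x y, let w := x *: e1 + y *: e2 + e3 in w != 0 /\ bform A w w = 0.
Proof.
move=> o12 o13 o23 q1 q2 e3_neq0.
have [x [y sol]] := binary_universal (- bform A e3 e3) q1 q2.
have [o21 o31 o32] : [/\ bform A e2 e1 = 0, bform A e3 e1 = 0 & bform A e3 e2 = 0].
  by rewrite (bformC symA e2) (bformC symA e3) (bformC symA e3) o12 o13 o23.
exists x, y; split.
  apply: contra_neq e3_neq0 => w0.
  have /eqP : bform A (x *: e1 + y *: e2 + e3) e1 = 0 by rewrite w0 bform0l.
  have /eqP : bform A (x *: e1 + y *: e2 + e3) e2 = 0 by rewrite w0 bform0l.
  rewrite !bformDl !bformZl o12 o21 o31 o32 !mulr0 !addr0 add0r !mulf_eq0.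
  rewrite (negbTE q1) (negbTE q2) !orbF => /eqP y0 /eqP x0.
  by move: w0; rewrite x0 y0 !scale0r !add0r.
rewrite !bformDl !bformDr !bformZl !bformZr o12 o13 o21 o23 o31 o32.
by rewrite -[bform A e3 e3]opprK -sol; ring.
Qed.

Lemma isotropic_in_kernel k (C : 'M[F]_(n, k)) : (k + 3 <= n)%N ->
  exists w, [/\ w != 0, w *m C = 0 & bform A w w = 0].
Proof.
move=> le_kn.
have [e1 e1_neq0 e1C] := kermx_neq0 (k := k) C ltac:(lia).
have [q1|q1] := eqVneq (bform A e1 e1) 0; first by exists e1.
have [e2 e2_neq0 /mul_row_form_eq0[e2C o21]] :=
  kermx_neq0 (row_mx C (A *m e1^T)) ltac:(lia).
have [q2|q2] := eqVneq (bform A e2 e2) 0; first by exists e2.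
have [e3 e3_neq0 /mul_row_form_eq0[/mul_row_form_eq0[e3C o31] o32]] :=
  kermx_neq0 (row_mx (row_mx C (A *m e1^T)) (A *m e2^T)) ltac:(lia).
have [x [y [w_neq0 qw]]] : exists x y,
    let w := x *: e1 + y *: e2 + e3 in w != 0 /\ bform A w w = 0.
  by apply: exists_isotropic_comb; rewrite // bformC.
exists (x *: e1 + y *: e2 + e3); split => //.
by rewrite !mulmxDl -!scalemxAl e1C e2C e3C !scaler0 !addr0.
Qed.

Hypothesis unitA : A \in unitmx.

Lemma exists_dual (e : 'rV[F]_n) : e != 0 -> exists f, bform A e f = 1.
Proof.
move=> e_neq0; have eA_neq0 : e *m A != 0.
  by apply: contra_neq e_neq0 => eA0; rewrite -(mulmxK unitA e) eA0 mul0mx.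
have [j eAj] : exists j, (e *m A) 0 j != 0.
  apply/existsP; apply: contraR eA_neq0; rewrite negb_exists => /forallP eA0.
  by apply/eqP/rowP => j; rewrite [RHS]mxE; have := eA0 j; rewrite negbK => /eqP.
exists (((e *m A) 0 j)^-1 *: delta_mx 0 j).
by rewrite bformZr /bform trmx_delta -colE [col _ _ _ _]mxE mulVf.
Qed.

Lemma totally_isotropic_plane : (5 <= n)%N ->
  exists u v z1 z2 : 'rV[F]_n,
  [/\ bform A u u = 0, bform A v v = 0, bform A u v = 0 &
      [/\ bform A u z1 = 1, bform A v z1 = 0, bform A u z2 = 0 & bform A v z2 = 1]].
Proof.
move=> n_ge5.
have [u [u_neq0 _ qu]] := isotropic_in_kernel (0 : 'M_(n, 0)) ltac:(lia).
have [z1 uz1] := exists_dual u_neq0.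
have [v [v_neq0 /mul_row_form_eq0[/mul_row_form_eq0[_ vu] vz1] qv]] :=
  isotropic_in_kernel (row_mx (row_mx (0 : 'M_(n, 0)) (A *m u^T)) (A *m z1^T))
    ltac:(lia).
have [h vh] := exists_dual v_neq0.
exists u, v, z1, (h - bform A u h *: z1); split; rewrite ?(bformC symA u v) //.
split; rewrite // bformDr bformNr bformZr.
  by rewrite uz1 mulr1 subrr.
by rewrite vz1 mulr0 subr0.
Qed.

End IsotropicVectors.

(* The form is p times a form that is anisotropic modulo p on Z u + Z v. *)
Definition mod_p_anisotropic n (A : 'M[int]_n) (p : nat) (u v : 'rV[int]_n) :=
  forall s t : int,
    (p %| bform A (s *: u + t *: v) (s *: u + t *: v))%Z /\
    ((p * p)%N %| bform A (s *: u + t *: v) (s *: u + t *: v) ->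
       (p %| s) && (p %| t))%Z.

Section ModPAnisotropic.
Variables (n : nat) (A : 'M[int]_n) (p : nat) (u v : 'rV[int]_n).
Hypotheses (p_pr : prime p) (anisoA : mod_p_anisotropic A p u v).

Lemma scale_comb (c s t : int) :
  (c * s) *: u + (c * t) *: v = c *: (s *: u + t *: v).
Proof. by rewrite scalerDr !scalerA. Qed.

Lemma mod_p_anisotropic_eq0 s t :
  bform A (s *: u + t *: v) (s *: u + t *: v) = 0 -> s = 0 /\ t = 0.
Proof.
have [k] := ubnP (`|s| + `|t|)%N; elim: k s t => // k IHk s t lt_st q0.
have /andP[/dvdzP[s' es] /dvdzP[t' et]] : (p %| s)%Z && (p %| t)%Z.
  by apply: (anisoA s t).2; rewrite q0 dvdz0.
subst s t.
have p_neq0 : p%:Z != 0 by rewrite eqz_nat -lt0n prime_gt0.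
suff [-> ->] : s' = 0 /\ t' = 0 by rewrite !mul0r.
have [/eqP | st_pos] := posnP (`|s'| + `|t'|)%N.
  by rewrite addn_eq0 !absz_eq0 => /andP[/eqP -> /eqP ->].
apply: IHk.
  by move: lt_st; rewrite !abszM /=; have := prime_gt1 p_pr; nia.
apply/eqP; move: q0; rewrite ![_ * p%:Z]mulrC scale_comb bformZl bformZr.
by move/eqP; rewrite !mulf_eq0 (negbTE p_neq0).
Qed.

Lemma rank2_mod_p_anisotropic : rank2 u v.
Proof. by move=> s t st0; apply: mod_p_anisotropic_eq0; rewrite st0 bform0l. Qed.

Lemma mod_p_anisotropic_saturated m x :
  m != 0 -> in_span2 u v (m *: x) -> x != 0 ->
  bform A x x != 0 /\ (p %| bform A x x)%Z.
Proof.
have p_neq0 : p%:Z != 0 by rewrite eqz_nat -lt0n prime_gt0.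
have [k] := ubnP `|m|%N; elim: k m x => // k IHk m x lt_m m_neq0 [s [t mx]] x_neq0.
have q_mx : bform A (s *: u + t *: v) (s *: u + t *: v) = m ^+ 2 * bform A x x.
  by rewrite -mx bformZl bformZr expr2 mulrA.
have qx_neq0 : bform A x x != 0.
  apply: contra_neq x_neq0 => qx0.
  have [s0 t0] : s = 0 /\ t = 0 by apply: mod_p_anisotropic_eq0; rewrite q_mx qx0 mulr0.
  apply/eqP; move: mx; rewrite s0 t0 !scale0r addr0 => /eqP.
  by rewrite scalemx_eq0 (negbTE m_neq0).
(* If p | m then p^2 | m^2 q(x), so p divides s and t and we descend to m / p. *)
have [/dvdzP[m' em] | pNm] := boolP (p %| m)%Z; last first.
  split=> //; have := (anisoA s t).1; rewrite q_mx !dvdzE !abszM Euclid_dvdM //.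
  by rewrite Euclid_dvdM // orbb -dvdzE (negbTE pNm).
have /andP[/dvdzP[s' es] /dvdzP[t' et]] : (p %| s)%Z && (p %| t)%Z.
  apply: (anisoA s t).2; rewrite q_mx em exprMn PoszM -mulrA.
  by rewrite [_ ^+ 2 * _]mulrC expr2 -mulrA mulrC dvdz_mull.
subst m s t; apply: (IHk m') x_neq0.
- by move: lt_m; rewrite abszM /=; have := prime_gt1 p_pr; have := absz_gt0 m'; nia.
- by apply: contra_neq m_neq0 => ->; rewrite mul0r.
- exists s', t'; apply: (scalemx_inj p_neq0).
  by rewrite -scale_comb scalerA !(mulrC p%:Z).
Qed.

End ModPAnisotropic.

Lemma mod_p_anisotropic_shift n (A : 'M[int]_n) p u v x y :
  mod_p_anisotropic A p u v ->
  mod_p_anisotropic A p (u + (p * p)%N%:Z *: x) (v + (p * p)%N%:Z *: y).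
Proof.
move=> anisoA s t.
have -> : s *: (u + (p * p)%N%:Z *: x) + t *: (v + (p * p)%N%:Z *: y) =
    (s *: u + t *: v) + (p * p)%N%:Z *: (s *: x + t *: y).
  by rewrite !scalerDr !scalerA mulrC [t * _]mulrC addrACA.
rewrite bform_shift; have [p_dvd p2_dvd] := anisoA s t; split.
  by rewrite rpredD // dvdz_mulr // PoszM dvdz_mulr.
by rewrite rpredDr ?dvdz_mulr.
Qed.

Lemma exists_shift_pos n (A : 'M[int]_n) (y x : 'rV[int]_n) (m : int) :
  0 < m -> 0 < bform A x x ->
  exists R, 0 < bform A (y + (m * R) *: x) (y + (m * R) *: x).
Proof.
move=> m_gt0 qx_gt0.
set a := bform A y y; set b1 := bform A x y; set b2 := bform A y x.
exists (`|a| + `|b1| + `|b2| + 1); rewrite bform_shift -/a -/b1 -/b2.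
have : - `|a| <= a by rewrite lerNnormlW.
have : - `|b1| <= b1 by rewrite lerNnormlW.
have : - `|b2| <= b2 by rewrite lerNnormlW.
set c := bform A x x in qx_gt0 *; set T := m * _.
have : `|a| + `|b1| + `|b2| + 1 <= T by rewrite /T; nia.
nia.
Qed.

Lemma Fp_nonsquare_anisotropic p (e : 'F_p) (s t : 'F_p) :
  (forall x, x ^+ 2 != e) -> s ^+ 2 - e * t ^+ 2 = 0 -> s = 0 /\ t = 0.
Proof.
move=> nonsq /eqP; rewrite subr_eq0 => /eqP s2.
have [t0 | t_neq0] := eqVneq t 0.
  by move: s2; rewrite t0 expr0n mulr0 => /eqP; rewrite sqrf_eq0 => /eqP.
by have := nonsq (s / t); rewrite expr_div_n s2 mulfK ?sqrf_eq0 ?eqxx.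
Qed.

Lemma mod_p_anisotropic_of_gram n (A : 'M[int]_n) p (e : 'F_p) u v a b c :
  prime p -> A^T = A -> (forall x : 'F_p, x ^+ 2 != e) ->
  bform A u u = p%:Z * a -> bform A u v = p%:Z * b -> bform A v v = p%:Z * c ->
  a%:~R = 1 :> 'F_p -> b%:~R = 0 :> 'F_p -> c%:~R = - e :> 'F_p ->
  mod_p_anisotropic A p u v.
Proof.
move=> p_pr symA nonsq qu quv qv a1 b0 ce s t.
have p_neq0 : p%:Z != 0 by rewrite eqz_nat -lt0n prime_gt0.
rewrite bform_comb // qu quv qv.
have -> : s ^+ 2 * (p%:Z * a) + 2 * s * t * (p%:Z * b) + t ^+ 2 * (p%:Z * c) =
    p%:Z * (s ^+ 2 * a + 2 * s * t * b + t ^+ 2 * c) by ring.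
split; first exact: dvdz_mulr.
rewrite PoszM dvdz_mul2l // !(dvdz_pcharf (pchar_Fp p_pr)).
rewrite !intrD !intrM a1 b0 ce mulr0 addr0 mulr1 mulrN [_ * e]mulrC -!expr2.
by move=> /eqP /(Fp_nonsquare_anisotropic nonsq) [-> ->]; rewrite eqxx.
Qed.

Section Reduction.
Variables (p : nat) (n : nat) (A : 'M[int]_n).
Hypothesis p_pr : prime p.
Local Notation red := (map_mx (intr : int -> 'F_p)).

Lemma intr_Fp_surj (x : 'F_p) : exists z : int, z%:~R = x.
Proof. by exists (x : nat)%:Z; rewrite -pmulrn natr_Zp. Qed.

Lemma red_surj (x : 'rV['F_p]_n) : exists y, red y = x.
Proof.
exists (map_mx (fun a : 'F_p => (a : nat)%:Z) x).
by apply/rowP => j; rewrite !mxE -pmulrn natr_Zp.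
Qed.

Lemma red_bform_eq0 x y : bform (red A) (red x) (red y) = 0 ->
  exists c, bform A x y = p%:Z * c.
Proof.
rewrite -rmorph_bform => /eqP; rewrite -(dvdz_pcharf (pchar_Fp p_pr)).
by case/dvdzP => c ->; exists c; rewrite mulrC.
Qed.

Lemma bform_lift_cofactor y1 y2 w1 w2 c : bform A y1 y2 = p%:Z * c ->
  exists c', bform A (y1 + p%:Z *: w1) (y2 + p%:Z *: w2) = p%:Z * c' /\
    c'%:~R = c%:~R + bform (red A) (red w1) (red y2) + bform (red A) (red y1) (red w2).
Proof.
move=> qy; exists (c + bform A w1 y2 + bform A y1 w2 + p%:Z * bform A w1 w2).
split; first by rewrite bform_shift qy; ring.
by rewrite !intrD intrM -!rmorph_bform -pmulrn pchar_Fp_0 // mul0r addr0.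
Qed.

Lemma exists_mod_p_anisotropic_pair :
  (2 < p)%N -> ~~ (p %| \det A)%Z -> (5 <= n)%N -> A^T = A ->
  exists u v, mod_p_anisotropic A p u v.
Proof.
move=> p_gt2 pNdet n_ge5 symA; pose Ap := red A.
have symAp : Ap^T = Ap by rewrite map_trmx symA.
have unitAp : Ap \in unitmx.
  by rewrite unitmxE unitfE det_map_mx -(dvdz_pcharf (pchar_Fp p_pr)).
have [u0 [v0 [z1 [z2 [qu0 qv0 quv0 [uz1 vz1 uz2 vz2]]]]]] :=
  totally_isotropic_plane symAp (Fp_binary_form_universal p_pr p_gt2) unitAp n_ge5.
have [e nonsq_e] := Fp_exists_nonsquare p_pr p_gt2.
have [U0 ?] := red_surj u0; have [V0 ?] := red_surj v0.
have [Z1 ?] := red_surj z1; have [Z2 ?] := red_surj z2; subst u0 v0 z1 z2.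
have [a0 qU0] := red_bform_eq0 qu0.
have [b0 qUV0] := red_bform_eq0 quv0.
have [c0 qV0] := red_bform_eq0 qv0.
have [al ral] := intr_Fp_surj ((1 - a0%:~R) / 2 : 'F_p).
have [be rbe] := intr_Fp_surj (- b0%:~R : 'F_p).
have [ga rga] := intr_Fp_surj ((- e - c0%:~R) / 2 : 'F_p).
(* Adding p W1, p W2 to the lifts shifts the cofactors a0, b0, c0 of q/p by
   2 al, be, 2 ga modulo p, which turns q/p into x^2 - e y^2 modulo p. *)
pose W1 := al *: Z1; pose W2 := be *: Z1 + ga *: Z2.
have [a [qu ra]] := bform_lift_cofactor W1 W1 qU0.
have [b [quv rb]] := bform_lift_cofactor W1 W2 qUV0.
have [c [qv rc]] := bform_lift_cofactor W2 W2 qV0.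
exists (U0 + p%:Z *: W1), (V0 + p%:Z *: W2).
apply: (mod_p_anisotropic_of_gram p_pr symA nonsq_e qu quv qv).
- rewrite ra /W1 !map_mxZ bformZl bformZr (bformC symAp _ (red U0)) uz1.
  by rewrite /= ral; field; apply: Fp_two_neq0.
- rewrite rb /W1 /W2 map_mxD !map_mxZ bformZl bformDr !bformZr.
  by rewrite /= (bformC symAp _ (red V0)) uz1 uz2 vz1 rbe; ring.
- rewrite rc /W2 map_mxD !map_mxZ bformDl bformDr !bformZl !bformZr.
  rewrite (bformC symAp _ (red V0)) (bformC symAp _ (red V0)) vz1 vz2 /= rga.
  by field; apply: Fp_two_neq0.
Qed.

End Reduction.

Lemma exists_mod_p_anisotropic_indefinite_pair n (A : 'M[int]_n) p :
  prime p -> (2 < p)%N -> ~~ (p %| \det A)%Z -> (5 <= n)%N -> A^T = A ->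
  lat_indef A ->
  exists u v, [/\ mod_p_anisotropic A p u v, 0 < bform A u u & bform A v v < 0].
Proof.
move=> p_pr p_gt2 pNdet n_ge5 symA [[x qx_gt0] [y qy_lt0]].
have [u [v anisoA]] := exists_mod_p_anisotropic_pair p_pr p_gt2 pNdet n_ge5 symA.
have pp_gt0 : 0 < (p * p)%N%:Z by rewrite ltz_nat muln_gt0 prime_gt0.
have [R quR] := exists_shift_pos u pp_gt0 qx_gt0.
have qy_gt0 : 0 < bform (- A) y y by rewrite bform_oppA oppr_gt0.
have [R' qvR'] := exists_shift_pos v pp_gt0 qy_gt0.
exists (u + (p * p)%N%:Z *: (R *: x)), (v + (p * p)%N%:Z *: (R' *: y)).
split; first exact: mod_p_anisotropic_shift.
  by rewrite scalerA.
by rewrite scalerA -oppr_gt0 -bform_oppA.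
Qed.

Section UnimodularRows.
Variables (n : nat) (R : 'M[int]_n) (i j : 'I_n).
Hypotheses (unitR : R \in unitmx) (neq_ij : i != j).

Lemma comb_row_unitmx a b :
  a *: row i R + b *: row j R = (a *: 'e_i + b *: 'e_j) *m R.
Proof. by rewrite mulmxDl -!scalemxAl -!rowE. Qed.

Lemma comb_deltaE a b (l : 'I_n) :
  (a *: 'e_i + b *: 'e_j : 'rV[int]_n) 0 l = a * (i == l)%:R + b * (j == l)%:R.
Proof. by rewrite !mxE eqxx /= ![l == _]eq_sym. Qed.

Lemma unitmx_rows_rank2 : rank2 (row i R) (row j R).
Proof.
move=> a b; rewrite comb_row_unitmx -(mul0mx _ R) => /(can_inj (mulmxK unitR)) e0.
have := congr1 (fun y : 'rV[int]_n => y 0 i) e0.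
have := congr1 (fun y : 'rV[int]_n => y 0 j) e0.
rewrite /= !comb_deltaE eqxx (negbTE neq_ij) eq_sym (negbTE neq_ij) !mxE.
by rewrite eqxx !mulr1 !mulr0 addr0 add0r.
Qed.

Lemma unitmx_rows_primitive2 : primitive2 (row i R) (row j R).
Proof.
move=> k x k_neq0 [a [b kx]]; pose y := x *m invmx R.
have ky : k *: y = a *: 'e_i + b *: 'e_j.
  by apply: (can_inj (mulmxK unitR)); rewrite -comb_row_unitmx -kx -scalemxAl mulmxKV.
have y_supp l : y 0 l = y 0 i * (i == l)%:R + y 0 j * (j == l)%:R.
  have [<- | neq_il] := eqVneq i l.
    by rewrite eq_sym (negbTE neq_ij) mulr1 mulr0 addr0.
  have [<- | neq_jl] := eqVneq j l; first by rewrite mulr1 mulr0 add0r.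
  have := congr1 (fun z : 'rV[int]_n => z 0 l) ky.
  rewrite /= comb_deltaE (negbTE neq_il) (negbTE neq_jl) mxE !mulr0 addr0.
  by move/eqP; rewrite mulf_eq0 (negbTE k_neq0) => /eqP ->.
exists (y 0 i), (y 0 j); rewrite comb_row_unitmx -[x](mulmxKV unitR) -/y.
by congr (_ *m _); apply/rowP => l; rewrite comb_deltaE y_supp.
Qed.

End UnimodularRows.

Lemma row_mul2 (R : comNzRingType) n (K : 'M[R]_2) (X : 'M[R]_(2, n)) (k : 'I_2) :
  row k (K *m X) = K k 0 *: row 0 X + K k 1 *: row 1 X.
Proof.
rewrite row_mul mulmx_sum_row !big_ord_recr big_ord0 /= add0r !mxE.
have -> : widen_ord (leqnSn 1) ord_max = 0 :> 'I_2 by apply: val_inj.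
by have -> : ord_max = 1 :> 'I_2 by apply: val_inj.
Qed.

Lemma saturation2 n (u v : 'rV[int]_n) : (2 <= n)%N -> rank2 u v ->
  exists r0 r1, [/\ rank2 r0 r1, primitive2 r0 r1, in_span2 r0 r1 u,
    in_span2 r0 r1 v &
    forall x, in_span2 r0 r1 x -> exists2 m, m != 0 & in_span2 u v (m *: x)].
Proof.
move=> n_ge2 uv_rank2.
pose M := \matrix_(k < 2, j < n) (if k == 0 :> nat then u else v) 0 j.
have [rowM0 rowM1] : row 0 M = u /\ row 1 M = v.
  by split; apply/rowP => j; rewrite !mxE.
(* In the Smith normal form M = L D R, the rows of R of index 0 and 1 span the
   saturation, as d_k (row k R) = row k (L^-1 M). *)
have [L unitL [R unitR [d _ defM]]] := int_Smith_normal_form M.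
set D := \matrix_(k, j) _ in defM.
pose w (k : 'I_2) := widen_ord n_ge2 k; pose r k := row (w k) R.
have rowDR k : row k (D *m R) = d`_k *: r k.
  rewrite row_mul /r [row (w k) R]rowE scalemxAl; congr (_ *m _); apply/rowP => j.
  by rewrite !mxE eqxx /= mulr_natr eq_sym -(inj_eq val_inj).
pose K := invmx L.
have HK (k : 'I_2) : d`_k *: r k = K k 0 *: u + K k 1 *: v.
  by rewrite -rowDR -rowM0 -rowM1 -row_mul2 defM -!mulmxA mulKmx.
have HL (k : 'I_2) : row k M = (L k 0 * d`_0) *: r 0 + (L k 1 * d`_1) *: r 1.
  by rewrite defM -mulmxA row_mul2 !rowDR !scalerA.
have d_neq0 (k : 'I_2) : d`_k != 0.
  apply/eqP => dk0; have /esym := HK k; rewrite dk0 scale0r => /uv_rank2[K0 K1].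
  have := congr1 (fun X : 'rV[int]_2 => X 0 k) (row_mul2 K L k).
  by rewrite /= mulVmx // K0 K1 !scale0r addr0 !mxE eqxx.
have w01 : w 0 != w 1 by rewrite -(inj_eq val_inj).
exists (r 0), (r 1); split.
- exact: unitmx_rows_rank2.
- exact: unitmx_rows_primitive2.
- by exists (L 0 0 * d`_0), (L 0 1 * d`_1); rewrite -rowM0 HL.
- by exists (L 1 0 * d`_0), (L 1 1 * d`_1); rewrite -rowM1 HL.
move=> x [s [t ->]]; exists (d`_0 * d`_1); first exact: (mulf_neq0 (d_neq0 0) (d_neq0 1)).
exists (s * d`_1 * K 0 0 + t * d`_0 * K 1 0), (s * d`_1 * K 0 1 + t * d`_0 * K 1 1).
transitivity ((s * d`_1) *: (d`_0 *: r 0) + (t * d`_0) *: (d`_1 *: r 1)).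
  by rewrite scalerDr !scalerA; congr (_ *: _ + _ *: _); ring.
by rewrite (HK 0) (HK 1) !scalerDr !scalerDl !scalerA addrACA.
Qed.

Lemma det_mx22 (R : comNzRingType) (M : 'M[R]_2) :
  \det M = M 0 0 * M 1 1 - M 0 1 * M 1 0.
Proof.
rewrite (expand_det_row _ 0) !big_ord_recr big_ord0 /= /cofactor !det_mx11 !mxE /=.
have -> : widen_ord (leqnSn 1) ord_max = 0 :> 'I_2 by apply: val_inj.
have -> : ord_max = 1 :> 'I_2 by apply: val_inj.
have -> : lift 0 0 = 1 :> 'I_2 by apply: val_inj.
have -> : lift 1 0 = 0 :> 'I_2 by apply: val_inj.
by rewrite add0r expr0 mul1r expr1 mulN1r mulrN.
Qed.

Lemma bil_bform n (A : 'M[int]_n) x y : bil A x y = bform A x y.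
Proof. by []. Qed.

Lemma rank2_neq0l n (u v : 'rV[int]_n) : rank2 u v -> u != 0.
Proof.
move=> uv_rank2; apply/eqP => u0; suff [] : 1 = 0 :> int /\ 0 = 0 :> int by [].
by apply: uv_rank2; rewrite u0 scaler0 scale0r addr0.
Qed.

Lemma gram2_det_neq0 n (A : 'M[int]_n) u v : A^T = A -> rank2 u v ->
  (forall x, in_span2 u v x -> x != 0 -> bform A x x != 0) ->
  \det (gram2 A u v) != 0.
Proof.
move=> symA uv_rank2 aniso; rewrite det_mx22 !mxE /= !bil_bform.
rewrite (bformC symA v u); set q0 := bform A u u; set B := bform A u v.
have q0_neq0 : q0 != 0.
  apply: aniso (rank2_neq0l uv_rank2).
  by exists 1, 0; rewrite scale1r scale0r addr0.
have x_neq0 : - B *: u + q0 *: v != 0.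
  by apply: contra_neq q0_neq0 => /uv_rank2[].
have := aniso _ (ex_intro _ _ (ex_intro _ _ erefl)) x_neq0.
rewrite bform_comb // -/q0 -/B.
have -> : (- B) ^+ 2 * q0 + 2 * - B * q0 * B + q0 ^+ 2 * bform A v v =
  q0 * (q0 * bform A v v - B * B) by ring.
by rewrite mulf_eq0 negb_or => /andP[].
Qed.

Theorem mainTheorem5 (n : nat) (A : 'M[int]_n) (N : nat) :
  (5 <= n)%N -> sym_gram A -> lat_nondeg A -> lat_indef A ->
  exists u v : 'rV[int]_n,
    [/\ rank2 u v, primitive2 u v, sig11 A u v &
        forall x, in_span2 u v x -> x != 0 -> (N%:Z <= `|bil A x x|)].
Proof.
move=> n_ge5 symA detA_neq0 indefA.
have [p ltNp p_pr] := prime_above (N + 2 + `|\det A|)%N.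
have p_gt2 : (2 < p)%N by lia.
have pNdet : ~~ (p %| \det A)%Z.
  rewrite dvdzE; apply: contraL ltNp => /dvdn_leq; rewrite absz_gt0 => /(_ detA_neq0).
  by rewrite -leqNgt; lia.
have [u [v [anisoA qu_gt0 qv_lt0]]] :=
  exists_mod_p_anisotropic_indefinite_pair p_pr p_gt2 pNdet n_ge5 symA indefA.
have n_ge2 : (2 <= n)%N by lia.
have [r0 [r1 [r_rank2 r_prim span_u span_v sat]]] :=
  saturation2 n_ge2 (rank2_mod_p_anisotropic p_pr anisoA).
have values x : in_span2 r0 r1 x -> x != 0 ->
    bform A x x != 0 /\ (p %| bform A x x)%Z.
  by case/sat=> m m_neq0 /(mod_p_anisotropic_saturated p_pr anisoA m_neq0).
exists r0, r1; split => //.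
  split; first by apply: gram2_det_neq0 => // x /values vals /vals[].
  by split; [exists u | exists v].
move=> x /values vals /vals[qx_neq0 p_dvd]; rewrite bil_bform -abszE lez_nat.
have : (p <= `|bform A x x|)%N by rewrite dvdn_leq ?absz_gt0 // -dvdzE.
lia.
Qed.
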